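(* The output $S=S^{(B)}$ of Algorithm 1 satisfies, for each $c\in C$, \[ \mathbb{E}[f_c(S)] \;\ge\; \left(1-\frac1e\right)\mathrm{OPT}. \]
   Context: Setup: $V$ is a finite nonempty ground set, $C$ is a finite nonempty set of ''colors'', $k=|C|$. For each $c\in C$, $f_c\colon 2^V\to\mathbb{R}_{\ge 0}$ is monotone and submodular. $B$ is a positive integer (the budget). $f(T\mid S)=f(S\cup T)-f(S)$ and $f(v\mid S)=f(\{v\}\mid S)$. $\mathrm{OPT}=\max_{S\subseteq V,\,|S|\le B}\min_{c\in C} f_c(S)$. $\Delta_V$ is the probability simplex over $V$. Algorithm 1 (assumes $\mathrm{OPT}$ known): set $S^{(0)}=\emptyset$; for $i=1,\dots,B$: choose any $x^{(i)}\in\Delta_V$ (the choice may depend arbitrarily on the history) such that $\sum_{v\in V}x^{(i)}_v f_c(v\mid S^{(i-1)})\ge \frac1B(\mathrm{OPT}-f_c(S^{(i-1)}))$ for all $c\in C$ (such $x^{(i)}$ always exists); sample $v^{(i)}\sim x^{(i)}$ using fresh randomness; set $S^{(i)}=S^{(i-1)}\cup\{v^{(i)}\}$. Output $S^{(B)}$. *)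

From HB Require Import structures.
From mathcomp Require Import all_boot all_order all_algebra.
From mathcomp Require Import reals sequences exp.
Set Implicit Arguments. Unset Strict Implicit. Unset Printing Implicit Defensive.
Import Order.TTheory GRing.Theory Num.Theory.
Local Open Scope ring_scope.

Section Defs.
Variables (R : realType) (V C : finType).

Definition monotone_fun (g : {set V} -> R) :=
  forall S T : {set V}, S \subset T -> g S <= g T.
Definition nonneg_fun (g : {set V} -> R) := forall S : {set V}, 0 <= g S.
Definition submodular (g : {set V} -> R) :=
  forall S T : {set V}, g (S :|: T) + g (S :&: T) <= g S + g T.

Definition marg (g : {set V} -> R) (v : V) (S : {set V}) := g (v |: S) - g S.

(* min_{c in C} f_c(S); c0 only witnesses that C is nonempty *)
Definition minf (c0 : C) (f : C -> {set V} -> R) (S : {set V}) : R :=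
  f (Order.arg_min c0 xpredT (fun c => f c S)) S.

(* OPT = max_{|S| <= B} min_c f_c(S)  (set0 witnesses feasibility) *)
Definition OPT (c0 : C) (f : C -> {set V} -> R) (B : nat) : R :=
  minf c0 f (Order.arg_max set0 (fun S : {set V} => (#|S| <= B)%N) (minf c0 f)).

Definition in_simplex (x : V -> R) := (forall v, 0 <= x v) /\ \sum_(v : V) x v = 1.

(* A (history-dependent) choice rule: given the sequence h of previously
   sampled elements, x h is the distribution x^{(i)} used at step i = size h + 1. *)
Fixpoint prA (x : seq V -> V -> R) (prefix rest : seq V) : R :=
  match rest with
  | [::] => 1
  | v :: r => x prefix v * prA x (rcons prefix v) r
  end.
Definition pr (x : seq V -> V -> R) (h : seq V) : R := prA x [::] h.

Definition valid_step (c0 : C) (f : C -> {set V} -> R) (B : nat)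
    (x : seq V -> V -> R) (h : seq V) :=
  in_simplex (x h) /\
  forall c : C, \sum_(v : V) x h v * marg (f c) v [set u in h]
                >= (OPT c0 f B - f c [set u in h]) / B%:R.

Definition alg1_policy (c0 : C) (f : C -> {set V} -> R) (B : nat)
    (x : seq V -> V -> R) :=
  forall h : seq V, (size h < B)%N -> 0 < pr x h -> valid_step c0 f B x h.

Definition expected_value (x : seq V -> V -> R) (B : nat) (g : {set V} -> R) : R :=
  \sum_(t : B.-tuple V) pr x t * g [set u in (t : seq V)].

End Defs.

(* Each step of Algorithm 1 closes, in expectation, a 1/B fraction of the gap
   OPT - E[f_c(S^(i))]: averaging the step condition over the histories of
   length i gives E[f_c(S^(i+1))] >= E[f_c(S^(i))] + (OPT - E[f_c(S^(i))])/B.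
   Hence after B steps the gap is at most (1 - 1/B)^B OPT <= OPT/e. *)
From HB Require Import structures.
From mathcomp Require Import all_boot all_order all_algebra.
From mathcomp Require Import reals sequences exp.
From mathcomp Require Import ring.
Set Implicit Arguments. Unset Strict Implicit. Unset Printing Implicit Defensive.
Import Order.TTheory GRing.Theory Num.Theory.
Local Open Scope ring_scope.

Lemma big_tuple0 {R : Type} {idx : R} (op : Monoid.law idx) {V : finType}
    (F : seq V -> R) :
  \big[op/idx]_(t : 0.-tuple V) F t = F [::].
Proof. by rewrite (big_pred1 [tuple]) // => t; rewrite [t]tuple0; exact/esym/eqxx. Qed.

Lemma big_tuple_rcons {R : Type} {idx : R} (op : Monoid.com_law idx)
    {V : finType} {n : nat} (F : seq V -> R) :
  \big[op/idx]_(t : n.+1.-tuple V) F t =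
  \big[op/idx]_(t : n.-tuple V) \big[op/idx]_(v : V) F (rcons t v).
Proof.
rewrite pair_big /=.
pose join (p : n.-tuple V * V) := [tuple of rcons p.1 p.2].
pose split (t : n.+1.-tuple V) :=
  ([tuple of belast (thead t) (behead t)], last (thead t) (behead t)).
rewrite (reindex join) //; exists split => [[t v] _ | t _].
  rewrite /split /join; case: t => -[|a s] Hs /=.
    by congr pair; apply: val_inj.
  by congr pair; [apply: val_inj; rewrite /= belast_rcons | rewrite /= last_rcons].
apply: val_inj => /=; rewrite -lastI.
by case: t => -[|a s] Hs //=; rewrite /thead (tnth_nth a).
Qed.

Lemma set_mem_rcons (V : finType) (s : seq V) v :
  [set u in rcons s v] = v |: [set u in s].
Proof. by apply/setP => u; rewrite !inE mem_rcons inE. Qed.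

Section Run.
Variables (R : realType) (V : finType) (x : seq V -> V -> R).

Lemma prA_rcons p r v : prA x p (rcons r v) = prA x p r * x (p ++ r) v.
Proof.
elim: r p => [|a r IH] p /=; first by rewrite cats0 mulr1 mul1r.
by rewrite IH mulrA cat_rcons.
Qed.

Lemma pr_rcons r v : pr x (rcons r v) = pr x r * x r v.
Proof. by rewrite /pr prA_rcons. Qed.

Lemma expected_value0 (g : {set V} -> R) : expected_value x 0 g = g set0.
Proof.
rewrite /expected_value (big_tuple0 _ (fun s => pr x s * g [set u in s])).
by rewrite /pr mul1r; congr g; apply/setP => u; rewrite !inE.
Qed.

Lemma expected_value_rcons n (g : {set V} -> R) :
  expected_value x n.+1 g =
  \sum_(t : n.-tuple V) pr x t * \sum_(v : V) x t v * g (v |: [set u in (t : seq V)]).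
Proof.
rewrite /expected_value (big_tuple_rcons _ (fun s => pr x s * g [set u in s])).
apply: eq_bigr => t _; rewrite mulr_sumr; apply: eq_bigr => v _.
by rewrite pr_rcons set_mem_rcons mulrA.
Qed.

Variable B : nat.
Hypothesis x_simplex :
  forall h : seq V, (size h < B)%N -> 0 < pr x h -> in_simplex (x h).

Lemma pr_ge0 s : (size s <= B)%N -> 0 <= pr x s.
Proof.
elim/last_ind: s => [|s v IH]; first by rewrite /pr ler01.
rewrite size_rcons pr_rcons => Hs.
have := IH (ltnW Hs); rewrite le0r => /orP[/eqP->|pr_pos]; first by rewrite mul0r.
by apply: mulr_ge0; [exact: ltW | have [] := x_simplex Hs pr_pos].
Qed.

Lemma sum_pr_tuple n : (n <= B)%N -> \sum_(t : n.-tuple V) pr x t = 1.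
Proof.
elim: n => [|n IH] Hn; first by rewrite (big_tuple0 _ (pr x)).
rewrite (big_tuple_rcons _ (pr x)) -(IH (ltnW Hn)); apply: eq_bigr => t _.
under eq_bigr do rewrite pr_rcons.
have Ht : (size t < B)%N by rewrite size_tuple.
rewrite -mulr_sumr; have := pr_ge0 (ltnW Ht).
rewrite le0r => /orP[/eqP->|pr_pos]; first by rewrite mul0r.
by have [_ ->] := x_simplex Ht pr_pos; rewrite mulr1.
Qed.

Lemma expected_value_drift (g : {set V} -> R) (a k : R) n :
  (n < B)%N ->
  (forall h : seq V, (size h < B)%N -> 0 < pr x h ->
     (a - g [set u in h]) * k <= \sum_(v : V) x h v * marg g v [set u in h]) ->
  expected_value x n g + (a - expected_value x n g) * k <= expected_value x n.+1 g.
Proof.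
move=> Hn drift; have mass := sum_pr_tuple (ltnW Hn).
have -> : expected_value x n g + (a - expected_value x n g) * k =
    \sum_(t : n.-tuple V) pr x t *
      (g [set u in (t : seq V)] + (a - g [set u in (t : seq V)]) * k).
  rewrite /expected_value -[a in LHS]mul1r -mass mulr_suml -sumrB mulr_suml.
  by rewrite -big_split; apply: eq_bigr => t _ /=; ring.
rewrite expected_value_rcons; apply: ler_sum => t _.
have Ht : (size t < B)%N by rewrite size_tuple.
have := pr_ge0 (ltnW Ht).
rewrite le0r => /orP[/eqP->|pr_pos]; first by rewrite !mul0r.
have [_ sum_x] := x_simplex Ht pr_pos.
rewrite ler_pM2l // -[X in X <= _]addrC.
have -> : \sum_(v : V) x t v * g (v |: [set u in (t : seq V)]) =
    \sum_(v : V) x t v * marg g v [set u in (t : seq V)] + g [set u in (t : seq V)].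
  rewrite -[g [set u in _] in RHS]mul1r -sum_x mulr_suml -big_split.
  by apply: eq_bigr => v _ /=; rewrite /marg mulrBr subrK.
by rewrite lerD2r drift.
Qed.

End Run.

Lemma invrn_le1 (R : numFieldType) n : (0 < n)%N -> n%:R^-1 <= 1 :> R.
Proof. by move=> n_gt0; rewrite invf_le1 ?ler1n ?ltr0n. Qed.

Lemma gap_geometric (R : numDomainType) (u : nat -> R) (a k : R) N :
  k <= 1 -> (forall n, (n < N)%N -> u n + (a - u n) * k <= u n.+1) ->
  forall n, (n <= N)%N -> a - u n <= (1 - k) ^+ n * (a - u 0%N).
Proof.
move=> k_le1 step; elim=> [|n IH] Hn; first by rewrite mul1r.
have closes : a - u n.+1 <= (1 - k) * (a - u n).
  have -> : (1 - k) * (a - u n) = a - (u n + (a - u n) * k) by ring.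
  exact: lerB (lexx a) (step n Hn).
apply: (le_trans closes); rewrite exprS -mulrA ler_wpM2l ?subr_ge0 //.
exact/IH/ltnW.
Qed.

Lemma expr_subr1Vn_le_expRN1 (R : realType) (B : nat) :
  (0 < B)%N -> (1 - B%:R^-1) ^+ B <= expR (-1 : R).
Proof.
move=> B_gt0; have -> : (-1 : R) = B%:R * - B%:R^-1.
  by rewrite mulrN mulfV // pnatr_eq0 -lt0n.
rewrite expRM_natl lerXn2r ?nnegrE ?expR_ge0 ?expR_ge1Dx //.
by rewrite subr_ge0 invrn_le1.
Qed.

Theorem lemma3 (R : realType) (V C : finType) (c0 : C)
    (f : C -> {set V} -> R) (B : nat) (x : seq V -> V -> R) :
  (0 < #|V|)%N ->
  (0 < B)%N ->
  (forall c, nonneg_fun (f c)) ->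
  (forall c, monotone_fun (f c)) ->
  (forall c, submodular (f c)) ->
  alg1_policy c0 f B x ->
  forall c : C, (1 - expR (-1)) * OPT c0 f B <= expected_value x B (f c).
Proof.
move=> _ B_gt0 f_ge0 _ _ policy c.
set opt := OPT c0 f B; set E := fun n => expected_value x n (f c).
have x_simplex (h : seq V) (Hh : (size h < B)%N) (Hpr : 0 < pr x h) :
    in_simplex (x h) by have [] := policy h Hh Hpr.
have gap : opt - E B <= (1 - B%:R^-1) ^+ B * (opt - E 0%N).
  apply: (@gap_geometric _ E opt _ B) => // [|n Hn].
    exact: invrn_le1.
  rewrite /E; apply: (expected_value_drift x_simplex) => // h Hh Hpr.
  by have [_ ->] := policy h Hh Hpr.
have E0_ge0 : 0 <= E 0%N by rewrite /E expected_value0; apply: f_ge0.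
have opt_ge0 : 0 <= opt by apply: f_ge0.
have gap_le : opt - E B <= expR (-1) * opt.
  apply: (le_trans gap); apply: (@le_trans _ _ ((1 - B%:R^-1) ^+ B * opt)).
    by rewrite ler_wpM2l ?lerBlDr ?lerDl // exprn_ge0 // subr_ge0 invrn_le1.
  by rewrite ler_wpM2r // expr_subr1Vn_le_expRN1.
by rewrite mulrBl mul1r lerBlDr addrC -lerBlDr.
Qed.
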